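(* Let $q$ be a prime power and suppose there exists a linear $(2,t_o,s,q)$-AONT with $2\le t_o$. Then \[ s\le \max\{\,1+(t_o-2)(q+1),\; 2+(t_o-1)(q-1)\,\}.\]
   Context: A linear $(t_i,t_o,s,q)$-AONT is given by an invertible $s\times s$ matrix $M$ over $\mathbb{F}_q$ defining the map $\mathbf{x}\mapsto\mathbf{y}=\mathbf{x}M^{-1}$ on row vectors of $\mathbb{F}_q^s$, such that for every set $I$ of $t_i$ input coordinates and every set $J$ of $s-t_o$ output coordinates, the pair $((x_i)_{i\in I},(y_j)_{j\in J})$ takes every value in $\mathbb{F}_q^{t_i+s-t_o}$ equally often as $\mathbf{x}$ ranges over $\mathbb{F}_q^s$. Equivalently, $M$ is invertible and every $t_o\times t_i$ submatrix of $M$ has rank $t_i$. *)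

From HB Require Import structures.
From mathcomp Require Import all_boot all_order all_algebra all_field.
Set Implicit Arguments. Unset Strict Implicit. Unset Printing Implicit Defensive.
Import GRing.Theory.
Local Open Scope ring_scope.

(* A to x ti submatrix is
   given by an injective choice of to rows (f) and ti columns (g); the order
   of the chosen rows/columns does not affect the rank. *)
Definition linear_AONT (F : fieldType) (ti to s : nat) (M : 'M[F]_s) : Prop :=
  M \in unitmx /\
  forall (f : 'I_to -> 'I_s) (g : 'I_ti -> 'I_s),
    injective f -> injective g -> \rank (mxsub f g M) = ti.

From mathcomp Require Import all_boot all_order all_algebra all_field.
From mathcomp Require Import zify.
Set Implicit Arguments.
Unset Strict Implicit.
Unset Printing Implicit Defensive.

Import GRing.Theory.
Local Open Scope ring_scope.

(* For distinct columns i, j and (a, b) <> 0, fewer than [to] rows satisfy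
   a M r i + b M r j = 0: [to] such rows would give a to x 2 submatrix killing
   the nonzero vector (a, b), hence of rank < 2.  Outside the zeros of column j
   (fewer than [to] rows), the rows split by the ratio M r i / M r j into q
   classes of fewer than [to] rows each.
   If some row r vanishes at both i and j, then r is a zero of column j lying in
   every ratio class, so the classes off the zeros of j have at most to - 2 rows
   and s <= (to - 1) + q (to - 2).
   Otherwise every row has at most one zero, so the s columns carry at most s
   zeros and two of them, i and j, carry at most 2 together.  Splitting by
   M r j / M r i, the ratio-0 class is the zero set of j and the other q - 1
   classes have fewer than [to] rows: s <= 2 + (q - 1)(to - 1). *)

Section ColumnPairs.
Variables (F : fieldType) (to s : nat) (M : 'M[F]_s).
Hypothesis aontM : linear_AONT 2 to M.

Lemma card_rows_lincomb_eq0_lt (a b : F) (i j : 'I_s) :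
  i != j -> (a != 0) || (b != 0) ->
  (#|[set r | (a * M r i + b * M r j == 0)%R]| < to)%N.
Proof.
move=> neq_ij ab_neq0; rewrite ltnNge; apply/negP => le_to_S.
pose f (k : 'I_to) := enum_val (widen_ord le_to_S k).
pose g (k : 'I_2) := if k == ord0 then i else j.
have f_inj : injective f by move=> k k' /enum_val_inj [/val_inj].
have g_inj : injective g.
  by move=> [[|[|?]] ?] [[|[|?]] ?] //; rewrite /g /= => eq_g;
    apply: val_inj; move: neq_ij; rewrite ?eq_g ?eqxx.
have full_sub : row_full (mxsub f g M) by rewrite /row_full aontM.2.
pose v : 'cV[F]_2 := \col_k (if k == ord0 then a else b).
have Av0 : mxsub f g M *m v = mxsub f g M *m 0.
  apply/colP => k; rewrite mulmx0 !mxE big_ord_recr big_ord1 !mxE /= mulrC [M _ j * _]mulrC.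
  by have := enum_valP (widen_ord le_to_S k); rewrite inE => /eqP.
have /colP v0 := row_full_inj full_sub Av0.
by move: ab_neq0; have := v0 0; have := v0 1; rewrite !mxE /= => -> ->; rewrite eqxx.
Qed.

Definition zero_rows (j : 'I_s) := [set r | M r j == 0].
Definition zero_cols (r : 'I_s) := [set j | M r j == 0].
Definition ratio_rows (i j : 'I_s) (l : F) := [set r | M r i == l * M r j].

Lemma card_zero_rows_lt (i j : 'I_s) : i != j -> (#|zero_rows j| < to)%N.
Proof.
move=> neq_ij; have := card_rows_lincomb_eq0_lt (a := 0) (b := 1) neq_ij.
rewrite oner_neq0 orbT => /(_ isT); congr (_ < _)%N; apply: eq_card => r.
by rewrite !inE mul0r add0r mul1r.
Qed.

Lemma card_ratio_rows_lt (i j : 'I_s) (l : F) : i != j -> (#|ratio_rows i j l| < to)%N.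
Proof.
move=> neq_ij; have := card_rows_lincomb_eq0_lt (a := 1) (b := - l) neq_ij.
rewrite oner_neq0 => /(_ isT); congr (_ < _)%N; apply: eq_card => r.
by rewrite !inE mul1r mulNr subr_eq0.
Qed.

End ColumnPairs.

Lemma exists_pair_sum_le2 (T : finType) (z : T -> nat) :
  (1 < #|T|)%N -> (\sum_x z x <= #|T|)%N -> exists i j, i != j /\ (z i + z j <= 2)%N.
Proof.
move=> lt1T sum_le; have /card_gt1P [x [y [_ _ neq_xy]]] := lt1T.
have [i _ min_i] := arg_minnP z (isT : predT x).
have [k neq_ki] : exists k, k != i.
  by case: (eqVneq x i) => [eq_xi | ]; [exists y; rewrite -eq_xi eq_sym | exists x].
have [j neq_ji min_j] := arg_minnP (P := predC1 i) z neq_ki.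
exists i, j; split; first by rewrite eq_sym.
have : (z i + #|T|.-1 * z j <= #|T|)%N.
  apply: leq_trans sum_le; rewrite (bigD1 i) //= leq_add2l -(cardC1 i) -sum_nat_const.
  exact: leq_sum.
have := min_i j isT; nia.
Qed.

Section FiniteField.
Variables (F : finFieldType) (to s : nat) (M : 'M[F]_s).

Lemma card_rows_by_ratio (i j : 'I_s) :
  s = (#|zero_rows M j| + \sum_l #|ratio_rows M i j l :\: zero_rows M j|)%N.
Proof.
rewrite -[s in LHS]card_ord -(cardsC (zero_rows M j)); congr addn.
rewrite -sum1_card (partition_big (fun r => M r i / M r j) predT) //=.
apply: eq_bigr => l _; rewrite -sum1_card; apply: eq_bigl => r; rewrite !inE.
have [//|/eqP Mrj_neq0 /=] := M r j =P 0.
by apply/eqP/eqP => [<-|->]; rewrite ?divfK ?mulfK.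
Qed.

Lemma sum_card_zero_rows : \sum_j #|zero_rows M j| = \sum_r #|zero_cols M r|.
Proof.
rewrite /zero_rows /zero_cols.
under eq_bigr do rewrite -sum1dep_card; under [RHS]eq_bigr do rewrite -sum1dep_card.
by rewrite (exchange_big_dep predT).
Qed.

Hypothesis aontM : linear_AONT 2 to M.

Lemma aont_bound_row_two_zeros (r : 'I_s) :
  (1 < #|zero_cols M r|)%N -> (s <= 1 + (to - 2) * (#|F| + 1))%N.
Proof.
move=> /card_gt1P [i [j [ri rj neq_ij]]]; rewrite !inE in ri rj.
have ratio_le l : (#|ratio_rows M i j l :\: zero_rows M j| <= to - 2)%N.
  have : (0 < #|ratio_rows M i j l :&: zero_rows M j|)%N.
    by apply/card_gt0P; exists r; rewrite !inE (eqP ri) (eqP rj) mulr0 eqxx.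
  have := card_ratio_rows_lt aontM l neq_ij; rewrite cardsD; lia.
rewrite [X in (X <= _)%N](card_rows_by_ratio i j).
have : (\sum_l #|ratio_rows M i j l :\: zero_rows M j| <= #|F| * (to - 2))%N.
  by rewrite -sum_nat_const; apply: leq_sum.
have := card_zero_rows_lt aontM neq_ij; nia.
Qed.

Lemma aont_bound_rows_one_zero :
  (1 < s)%N -> (forall r, #|zero_cols M r| <= 1)%N ->
  (s <= 2 + (to - 1) * (#|F| - 1))%N.
Proof.
move=> lt1s one_zero.
have sum_le : (\sum_j #|zero_rows M j| <= #|'I_s|)%N.
  by rewrite sum_card_zero_rows -sum1_card; apply: leq_sum.
have lt1I : (1 < #|'I_s|)%N by rewrite card_ord.
have [i [j [neq_ij /= small_ij]]] := exists_pair_sum_le2 lt1I sum_le.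
have neq_ji : j != i by rewrite eq_sym.
have ratio0 : ratio_rows M j i 0 = zero_rows M j by apply/setP => r; rewrite !inE mul0r.
rewrite [X in (X <= _)%N](card_rows_by_ratio j i) (bigD1 (0 : F)) //= ratio0 addnA.
apply: leq_add.
  by apply: leq_trans small_ij; rewrite leq_add2l; apply/subset_leq_card/subsetDl.
apply: leq_trans (_ : _ <= \sum_(l | l != 0%R) (to - 1))%N _.
  apply: leq_sum => l _; apply: leq_trans (subset_leq_card (subsetDl _ _)) _.
  by have := card_ratio_rows_lt aontM l neq_ji; lia.
by rewrite sum_nat_const cardC1 mulnC -subn1.
Qed.

End FiniteField.

Theorem mainTheorem17 (F : finFieldType) (q to s : nat) (M : 'M[F]_s) :
  #|F| = q -> (2 <= to)%N -> linear_AONT 2 to M ->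
  (s <= maxn (1 + (to - 2) * (q + 1)) (2 + (to - 1) * (q - 1)))%N.
Proof.
move=> <- _ aontM; rewrite leq_max.
have [le_s1 | lt1s] := leqP s 1; first by rewrite (leq_trans le_s1) ?leq_addr.
have [/existsP [r two_zeros] | /existsPn one_zero] := boolP [exists r, 1 < #|zero_cols M r|]%N.
  by rewrite (aont_bound_row_two_zeros aontM two_zeros).
rewrite (aont_bound_rows_one_zero aontM lt1s) ?orbT // => r.
by rewrite leqNgt one_zero.
Qed.
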